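(* Let $D_1,\dots,D_n\in\mathbb{R}^{d\times m}$ be datum shapes with $\tilde{D}_i=\begin{bmatrix}D_i\\ \mathbf{1}^{\top}\end{bmatrix}$ such that each $\tilde{D}_i\tilde{D}_i^{\top}$ is invertible, and let $\mathcal{Q}_{I}=\sum_{i=1}^n\tilde{D}_i^{\top}(\tilde{D}_i\tilde{D}_i^{\top})^{-1}\tilde{D}_i$. Fix a diagonal matrix $\Lambda\in\mathbb{R}^{d\times d}$ and consider problem (I): $$\min_{\tilde{A}_1,\dots,\tilde{A}_n\in\mathbb{R}^{d\times(d+1)},\,S\in\mathbb{R}^{d\times m}}\ \sum_{i=1}^n\|\tilde{A}_i\tilde{D}_i-S\|_F^2\quad\text{s.t.}\quad SS^{\top}=\Lambda,\ S\mathbf{1}=0.$$ If each $D_i$ is replaced by $D_i'=R_iD_i+t_i\mathbf{1}^{\top}$ for arbitrary (possibly distinct) rotations $R_i\in\mathbb{R}^{d\times d}$ and translations $t_i\in\mathbb{R}^d$, then the matrix $\mathcal{Q}_I$ is unchanged, and so is the optimal reference shape $S$ of problem (I) (the set of $S$-components of optimal solutions is the same for the original and the transformed datum shapes).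
   Context: $\mathbf{1}\in\mathbb{R}^m$ denotes the all-ones vector and $\|\cdot\|_F$ the Frobenius norm. *)

From HB Require Import structures.
From mathcomp Require Import all_boot all_order all_algebra.
From mathcomp Require Import reals.
Set Implicit Arguments. Unset Strict Implicit. Unset Printing Implicit Defensive.
Import Order.TTheory GRing.Theory Num.Theory.
Local Open Scope ring_scope.

Section Defs.
Variable R : realType.

Definition ones (m : nat) : 'cV[R]_m := const_mx 1.

Definition Dtilde (d m : nat) (D : 'M[R]_(d, m)) : 'M[R]_(d + 1, m) :=
  col_mx D (ones m)^T.

Definition QI (n d m : nat) (D : 'I_n -> 'M[R]_(d, m)) : 'M[R]_m :=
  \sum_(i < n) ((Dtilde (D i))^T *m invmx (Dtilde (D i) *m (Dtilde (D i))^T)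
                 *m Dtilde (D i)).

Definition frob2 (p q : nat) (A : 'M[R]_(p, q)) : R :=
  \sum_(i < p) \sum_(j < q) A i j ^+ 2.

Definition objI (n d m : nat) (D : 'I_n -> 'M[R]_(d, m))
  (A : 'I_n -> 'M[R]_(d, d + 1)) (S : 'M[R]_(d, m)) : R :=
  \sum_(i < n) frob2 (A i *m Dtilde (D i) - S).

Definition feasI (d m : nat) (Lam : 'M[R]_d) (S : 'M[R]_(d, m)) : Prop :=
  S *m S^T = Lam /\ S *m ones m = 0.

Definition optimalI (n d m : nat) (D : 'I_n -> 'M[R]_(d, m)) (Lam : 'M[R]_d)
  (A : 'I_n -> 'M[R]_(d, d + 1)) (S : 'M[R]_(d, m)) : Prop :=
  feasI Lam S /\
  forall (A' : 'I_n -> 'M[R]_(d, d + 1)) (S' : 'M[R]_(d, m)),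
    feasI Lam S' -> objI D A S <= objI D A' S'.

Definition optimal_shapeI (n d m : nat) (D : 'I_n -> 'M[R]_(d, m))
  (Lam : 'M[R]_d) (S : 'M[R]_(d, m)) : Prop :=
  exists A : 'I_n -> 'M[R]_(d, d + 1), optimalI D Lam A S.

Definition rotation (d : nat) (Q : 'M[R]_d) : Prop :=
  Q^T *m Q = 1%:M /\ \det Q = 1.

End Defs.

(* An affine change D' = Q D + t 1^T of a datum shape acts on its homogeneous
   coordinates by left multiplication with the invertible matrix
   M = [[Q, t], [0, 1]]: D~' = M D~.  Each summand of Q_I is the orthogonal
   projector onto the row space of D~_i, which invertible left factors do not
   change.  In problem (I) the unknown A_i only enters through A_i D~_i, and
   A_i |-> A_i M_i is a bijection, so both problems have the same objective
   values for each S and therefore the same optimal reference shapes. *)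
From HB Require Import structures.
From mathcomp Require Import all_boot all_order all_algebra.
From mathcomp Require Import reals.
Set Implicit Arguments.
Unset Strict Implicit.
Unset Printing Implicit Defensive.

Import Order.TTheory GRing.Theory Num.Theory.
Local Open Scope ring_scope.

Section RowProjector.
Variable R : comUnitRingType.

Lemma invmxM (k : nat) (A B : 'M[R]_k) :
  A \in unitmx -> B \in unitmx -> invmx (A *m B) = invmx B *m invmx A.
Proof.
move=> uA uB.
have uAB : A *m B \in unitmx by rewrite unitmx_mul uA uB.
have invAB : invmx B *m invmx A *m (A *m B) = 1%:M.
  by rewrite mulmxA -(mulmxA (invmx B)) mulVmx // mulmx1 mulVmx.
by rewrite -[invmx (A *m B)]mul1mx -invAB -mulmxA mulmxV // mulmx1.
Qed.

Definition rowproj (k m : nat) (X : 'M[R]_(k, m)) : 'M[R]_m :=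
  X^T *m invmx (X *m X^T) *m X.

Lemma rowproj_mull (k m : nat) (M : 'M[R]_k) (X : 'M[R]_(k, m)) :
  M \in unitmx -> X *m X^T \in unitmx -> rowproj (M *m X) = rowproj X.
Proof.
move=> uM uX; rewrite /rowproj.
have uMT : M^T \in unitmx by rewrite unitmx_tr.
have uXMT : X *m X^T *m M^T \in unitmx by rewrite unitmx_mul uX uMT.
rewrite !trmx_mul !mulmxA -[M *m X *m X^T](mulmxA M) -(mulmxA M).
rewrite invmxM // invmxM // -!mulmxA; congr (_ *m _).
by rewrite (mulKVmx uMT) (mulKmx uM).
Qed.

End RowProjector.

Section ProblemI.
Variables (R : realType) (n d m : nat).
Implicit Types (D : 'I_n -> 'M[R]_(d, m)) (M : 'I_n -> 'M[R]_(d + 1)).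

Lemma QIE D : QI D = \sum_(i < n) rowproj (Dtilde (D i)).
Proof. by []. Qed.

Lemma QI_mull D D' M :
  (forall i, M i \in unitmx) ->
  (forall i, Dtilde (D i) *m (Dtilde (D i))^T \in unitmx) ->
  (forall i, Dtilde (D' i) = M i *m Dtilde (D i)) ->
  QI D' = QI D.
Proof.
move=> uM uD eD; rewrite !QIE.
by apply: eq_bigr => i _; rewrite eD rowproj_mull.
Qed.

Lemma objI_mull D D' M A S :
  (forall i, Dtilde (D' i) = M i *m Dtilde (D i)) ->
  objI D' A S = objI D (fun i => A i *m M i) S.
Proof. by move=> eD; apply: eq_bigr => i _; rewrite eD mulmxA. Qed.

Lemma optimal_shapeI_reparam D1 D2 Lam
    (f : ('I_n -> 'M[R]_(d, d + 1)) -> 'I_n -> 'M[R]_(d, d + 1))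
    (g : ('I_n -> 'M[R]_(d, d + 1)) -> 'I_n -> 'M[R]_(d, d + 1)) S :
  (forall A S, objI D1 A S = objI D2 (f A) S) ->
  (forall A S, objI D2 A S = objI D1 (g A) S) ->
  optimal_shapeI D1 Lam S -> optimal_shapeI D2 Lam S.
Proof.
move=> hf hg [A [feasS optA]]; exists (f A); split => // A' S' feasS'.
by rewrite -hf hg; apply: optA.
Qed.

Lemma optimal_shapeI_mull D D' M Lam S :
  (forall i, M i \in unitmx) ->
  (forall i, Dtilde (D' i) = M i *m Dtilde (D i)) ->
  optimal_shapeI D' Lam S <-> optimal_shapeI D Lam S.
Proof.
move=> uM eD.
have eD' i : Dtilde (D i) = invmx (M i) *m Dtilde (D' i) by rewrite eD mulKmx.
split; apply: optimal_shapeI_reparam => A S'.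
- exact: objI_mull eD.
- exact: objI_mull eD'.
- exact: objI_mull eD'.
- exact: objI_mull eD.
Qed.

End ProblemI.

Section AffineAction.
Variables (R : realType) (d : nat).

Definition affine_mx (Q : 'M[R]_d) (t : 'cV[R]_d) : 'M[R]_(d + 1) :=
  block_mx Q t 0 1%:M.

Lemma Dtilde_affine m (Q : 'M[R]_d) (t : 'cV[R]_d) (D : 'M[R]_(d, m)) :
  Dtilde (Q *m D + t *m (ones R m)^T) = affine_mx Q t *m Dtilde D.
Proof. by rewrite /Dtilde /affine_mx mul_block_col mul0mx add0r mul1mx. Qed.

Lemma affine_mx_unitmx (Q : 'M[R]_d) (t : 'cV[R]_d) :
  (affine_mx Q t \in unitmx) = (Q \in unitmx).
Proof. by rewrite !unitmxE det_ublock det1 mulr1. Qed.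

Lemma rotation_unitmx (Q : 'M[R]_d) : rotation Q -> Q \in unitmx.
Proof. by case=> _ detQ; rewrite unitmxE detQ unitr1. Qed.

End AffineAction.

Theorem proposition2 (R : realType) (n d m : nat)
  (D : 'I_n -> 'M[R]_(d, m)) (Rot : 'I_n -> 'M[R]_d) (t : 'I_n -> 'cV[R]_d)
  (lam : 'rV[R]_d) :
  (forall i, Dtilde (D i) *m (Dtilde (D i))^T \in unitmx) ->
  (forall i, rotation (Rot i)) ->
  let D' := fun i => Rot i *m D i + t i *m (ones R m)^T in
  QI D' = QI D /\
  (forall S : 'M[R]_(d, m),
     optimal_shapeI D' (diag_mx lam) S <-> optimal_shapeI D (diag_mx lam) S).
Proof.
move=> uD rotR D'.
pose M i := affine_mx (Rot i) (t i).
have uM i : M i \in unitmx by rewrite affine_mx_unitmx rotation_unitmx.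
have eD i : Dtilde (D' i) = M i *m Dtilde (D i) by exact: Dtilde_affine.
split; first exact: QI_mull uM uD eD.
by move=> S; apply: optimal_shapeI_mull uM eD.
Qed.
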